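(* Let $r>1$ be real and let $p_m,q$ be $r$-mighty primes with $p_m>q^2$. If $n\in\mathbb{N}$ satisfies $\sigma_{-r}(n)\in\left(\sigma_{-r}(q)u_m(r),\ \sigma_{-r}(qp_m)\right)$, then $q\mid n$.
   Context: $p_m$ denotes the $m$-th prime. For $n\in\mathbb{N}$, $\sigma_{-r}(n)=\sum_{d\mid n}d^{-r}$. Let $u_m(r)=\prod_{t=m+1}^\infty\frac1{1-p_t^{-r}}$. A prime $p_m$ is $r$-mighty if $1+p_m^{-r}>u_m(r)$. *)

From HB Require Import structures.
From mathcomp Require Import all_boot all_order all_algebra.
From mathcomp Require Import all_classical all_reals all_analysis.
Set Implicit Arguments. Unset Strict Implicit. Unset Printing Implicit Defensive.
Import Order.TTheory GRing.Theory Num.Theory.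
Import numFieldNormedType.Exports.
Local Open Scope ring_scope.

Lemma next_prime_ex (n : nat) : exists p, (n < p)%N && prime p.
Proof. by case: (prime_above n) => p H1 H2; exists p; rewrite H1 H2. Qed.

Definition next_prime (n : nat) : nat := ex_minn (next_prime_ex n).

(* nth_prime m = p_m, 1-indexed: p_1 = 2, p_2 = 3, ... (nth_prime 0 = 1 is junk) *)
Definition nth_prime (m : nat) : nat := iter m next_prime 1%N.

Definition sigma_neg (R : realType) (r : R) (n : nat) : R :=
  \sum_(d <- divisors n) (d%:R) `^ (- r).

Definition u_tail (R : realType) (r : R) (m : nat) : R :=
  limn (fun N : nat => \prod_(m.+1 <= t < N) (1 - (nth_prime t)%:R `^ (- r))^-1).

Definition mighty (R : realType) (r : R) (m : nat) : Prop :=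
  1 + (nth_prime m)%:R `^ (- r) > u_tail r m.

From HB Require Import structures.
From mathcomp Require Import all_boot all_order all_algebra.
From mathcomp Require Import all_classical all_reals all_analysis.
From mathcomp Require Import ring lra.
Import Order.TTheory GRing.Theory Num.Theory.
Import numFieldNormedType.Exports.

Set Implicit Arguments.
Unset Strict Implicit.
Unset Printing Implicit Defensive.

Local Open Scope ring_scope.

(* Write q = p_k, P = p_m and suppose that q does not divide n.  If some prime
   p < q divides n, then sigma(n) >= 1 + p^-r >= (1 + q^-r) (1 + P^-r)
   >= sigma(q P), because P > q^2; this contradicts the upper bound.  Otherwise
   every prime factor of n exceeds q, so sigma(n) is at most a partial Euler
   product over the primes after q, hence sigma(n) <= u_k(r) < 1 + q^-r
   = sigma(q) <= sigma(q) u_m(r) by the mightiness of q, contradicting the lower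
   bound.  The partial Euler products do converge to u_k(r): they increase, and
   1/(1 - x) <= exp(2x) together with sum_t p_t^-r <= sum_t (t+1)^-r bounds
   them by exp(2/(r-1)). *)

Lemma next_primeP n : [/\ (n < next_prime n)%N, prime (next_prime n)
  & forall p, (n < p)%N -> prime p -> (next_prime n <= p)%N].
Proof.
rewrite /next_prime; case: ex_minnP => p /andP[np pp] min_p; split=> // q nq pq.
by apply: min_p; rewrite nq pq.
Qed.

Lemma nth_primeS t : nth_prime t.+1 = next_prime (nth_prime t).
Proof. by []. Qed.

Lemma prime_nth_prime t : (0 < t)%N -> prime (nth_prime t).
Proof.
by case: t => // t _; rewrite nth_primeS; case: (next_primeP (nth_prime t)).
Qed.

Lemma nth_prime_ltS t : (nth_prime t < nth_prime t.+1)%N.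
Proof. by rewrite nth_primeS; case: (next_primeP (nth_prime t)). Qed.

Lemma ltn_nth_prime : {mono nth_prime : a b / (a < b)%N}.
Proof.
have homo : {homo nth_prime : a b / (a < b)%N}.
  by apply: homo_ltn; [exact: ltn_trans | exact: nth_prime_ltS].
move=> a b; case: (ltnP a b) => [/homo // | ba].
by apply/negbTE; rewrite -leqNgt; exact: ltnW_homo.
Qed.

Lemma ltn_id_nth_prime t : (t < nth_prime t)%N.
Proof. by elim: t => // t IH; exact: leq_ltn_trans IH (nth_prime_ltS t). Qed.

Lemma nth_prime_gap t p : prime p -> p != nth_prime t ->
  (p < nth_prime t.+1)%N -> (p < nth_prime t)%N.
Proof.
move=> pp pt ltp; rewrite ltn_neqAle pt leqNgt /=; apply: contraL ltp => tp.
by rewrite -leqNgt nth_primeS; case: (next_primeP (nth_prime t)) => _ _ ->.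
Qed.

Lemma ler_sum_uniq_sub (R : numDomainType) (T : eqType) (s t : seq T)
    (F : T -> R) :
  uniq s -> uniq t -> {subset s <= t} -> (forall x, x \in t -> 0 <= F x) ->
  \sum_(x <- s) F x <= \sum_(x <- t) F x.
Proof.
move=> us ut st F0; rewrite [leRHS](bigID (mem s)) /=.
have -> : \sum_(x <- t | x \in s) F x = \sum_(x <- s) F x.
  rewrite -big_filter; apply/perm_big/uniq_perm; rewrite ?filter_uniq //.
  by move=> x; rewrite mem_filter andb_idr //; exact: st.
by rewrite lerDl big_seq_cond sumr_ge0 // => x /andP[/F0].
Qed.

Lemma muln_gcdn_coprime d a b : coprime a b -> (d %| a * b)%N ->
  (gcdn d a * gcdn d b)%N = d.
Proof.
move=> cab dab; apply/eqP; rewrite eqn_dvd; apply/andP; split.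
  rewrite Gauss_dvd ?dvdn_gcdl //.
  exact: coprime_dvdl (dvdn_gcdr _ _) (coprime_dvdr (dvdn_gcdr _ _) cab).
by rewrite muln_gcdl dvdn_gcd dvdn_mulr //= muln_gcdr dvdn_gcd dvdn_mull.
Qed.

Section SigmaNeg.
Variables (R : realType) (r : R).

Lemma sigma_neg_ge0 n : 0 <= sigma_neg r n.
Proof. by rewrite sumr_ge0 // => d _; exact: powR_ge0. Qed.

Lemma sigma_neg1 : sigma_neg r 1 = 1.
Proof. by rewrite /sigma_neg big_seq1 powR1. Qed.

Lemma sigma_neg_ge1D n d : (0 < n)%N -> d != 1%N -> (d %| n)%N ->
  1 + d%:R `^ (- r) <= sigma_neg r n.
Proof.
move=> n0 d1 dn.
have := @ler_sum_uniq_sub R _ [:: 1%N; d] (divisors n) (fun d => d%:R `^ (- r)).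
rewrite !big_cons big_nil addr0 powR1; apply.
- by rewrite /= inE eq_sym d1.
- exact: divisors_uniq.
- by move=> x; rewrite !inE => /orP[] /eqP ->; rewrite -dvdn_divisors.
- by move=> *; exact: powR_ge0.
Qed.

Lemma sigma_neg_pfactor_le p e : prime p ->
  sigma_neg r (p ^ e) <= \sum_(i < e.+1) (p%:R `^ (- r)) ^+ i.
Proof.
move=> pp.
have divP d : d \in divisors (p ^ e) ->
    d = (p ^ logn p d)%N /\ (logn p d <= e)%N.
  rewrite -dvdn_divisors ?expn_gt0 ?prime_gt0 //.
  by case/(dvdn_pfactor _ _ pp) => i ie ->; rewrite pfactorK.
have powE d : d \in divisors (p ^ e) ->
    d%:R `^ (- r) = (p%:R `^ (- r)) ^+ logn p d.
  move=> /divP[dE _]; rewrite [in LHS]dE.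
  by rewrite natrX -powR_mulrn ?ler0n // powRAC powR_mulrn // powR_ge0.
rewrite /sigma_neg big_seq (eq_bigr _ powE) -big_seq.
rewrite -(big_map (logn p) xpredT (fun i => (p%:R `^ (- r)) ^+ i)).
rewrite -(big_mkord xpredT (fun i => (p%:R `^ (- r)) ^+ i)).
apply: ler_sum_uniq_sub; rewrite ?iota_uniq //.
- rewrite map_inj_in_uniq ?divisors_uniq // => x y /divP[-> _] /divP[-> _].
  by rewrite !pfactorK // => ->.
- by move=> i /mapP[d /divP[_ de] ->]; rewrite mem_index_iota.
Qed.

Lemma sigma_neg_prime p : prime p -> sigma_neg r p = 1 + p%:R `^ (- r).
Proof.
move=> pp; apply/le_anti/andP; split.
  move: (sigma_neg_pfactor_le 1 pp).
  by rewrite expn1 !big_ord_recr big_ord0 /= add0r expr0 expr1.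
by rewrite sigma_neg_ge1D ?prime_gt0 // neq_ltn prime_gt1 ?orbT.
Qed.

Lemma sigma_neg_coprime_le a b : coprime a b -> (0 < a)%N -> (0 < b)%N ->
  sigma_neg r (a * b) <= sigma_neg r a * sigma_neg r b.
Proof.
move=> cab a0 b0.
pose split_div d := (gcdn d a, gcdn d b).
pose G (z : nat * nat) := ((z.1 * z.2)%N%:R : R) `^ (- r).
have splitK d : d \in divisors (a * b) -> (gcdn d a * gcdn d b)%N = d.
  by rewrite -dvdn_divisors ?muln_gt0 ?a0 //; exact: muln_gcdn_coprime.
have -> : sigma_neg r (a * b) = \sum_(d <- divisors (a * b)) G (split_div d).
  rewrite /sigma_neg big_seq [RHS]big_seq; apply: eq_bigr => d /splitK dE.
  by rewrite /G /= dE.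
have -> : sigma_neg r a * sigma_neg r b =
    \sum_(z <- [seq (x, y) | x <- divisors a, y <- divisors b]) G z.
  rewrite big_allpairs big_distrl; apply: eq_bigr => x _.
  by rewrite big_distrr; apply: eq_bigr => y _; rewrite /G natrM powRM.
rewrite -(big_map split_div xpredT G); apply: ler_sum_uniq_sub.
- rewrite map_inj_in_uniq ?divisors_uniq // => x y /splitK xE /splitK yE.
  by case=> ea eb; rewrite -xE -yE ea eb.
- by rewrite allpairs_uniq ?divisors_uniq // => -[? ?] [? ?] _ _ [-> ->].
- move=> _ /mapP[d _ ->]; apply/allpairsP; exists (gcdn d a, gcdn d b).
  by rewrite -!dvdn_divisors ?dvdn_gcdr.
- by move=> z _; exact: powR_ge0.
Qed.

End SigmaNeg.

Lemma invr1B_le_expR (R : realType) (x : R) : 0 <= x <= 2^-1 ->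
  (1 - x)^-1 <= expR (2 * x).
Proof.
case/andP=> x0 x2; apply: le_trans (expR_ge1Dx _).
have x1 : x < 1 by apply: le_lt_trans x2 _; lra.
rewrite -[leLHS]div1r ler_pdivrMr ?subr_gt0 //.
have -> : (1 + 2 * x) * (1 - x) = 1 + x * (1 - 2 * x) by ring.
by rewrite lerDl mulr_ge0 // subr_ge0 -ler_pdivlMl //; lra.
Qed.

Lemma sum_geometric_le (R : realType) (x : R) e : 0 < x < 1 ->
  \sum_(i < e) x ^+ i <= (1 - x)^-1.
Proof.
case/andP=> x0 x1; rewrite -[leRHS]mul1r.
have := @geometric_le_lim R e 1 x ler01 x0; rewrite seriesEord /=.
by under eq_bigr do rewrite mul1r; apply; rewrite ger0_norm ?ltW.
Qed.

(* Tangent-line inequality for the convex map t |-> t^(1-r) at x + 1. *)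
Lemma powR_subS_ge (R : realType) (r x : R) : 1 <= r -> 0 < x ->
  (r - 1) * (x + 1) `^ (- r) <= x `^ (1 - r) - (x + 1) `^ (1 - r).
Proof.
move=> r1 x0; have y0 : 0 < x + 1 by lra.
rewrite /powR !gt_eqF //.
set L := ln x; set M := ln (x + 1); set E := expR ((1 - r) * M).
have E0 : 0 <= E := expR_ge0 _.
have ML : (x + 1)^-1 <= M - L.
  have := expR_ge1Dx (ln (x / (x + 1))).
  rewrite lnK ?posrE ?divr_gt0 // ln_div ?posrE // -/L -/M.
  have -> : x / (x + 1) = 1 - (x + 1)^-1 by field; exact: lt0r_neq0.
  by rewrite lerD2l lerNr opprB.
have -> : expR (- r * M) = E / (x + 1).
  by rewrite (_ : - r * M = (1 - r) * M - M) ?expRB ?lnK ?posrE //; ring.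
have convex : E * (1 + (r - 1) * (M - L)) <= expR ((1 - r) * L).
  rewrite (_ : (1 - r) * L = (1 - r) * M + (r - 1) * (M - L)); last by ring.
  by rewrite expRD ler_wpM2l // expR_ge1Dx.
have tangent : (r - 1) * (E / (x + 1)) <= E * ((r - 1) * (M - L)).
  by rewrite mulrCA ler_wpM2l // ler_wpM2l // subr_ge0.
rewrite lerBrDl; apply: le_trans convex.
by rewrite mulrDr mulr1 lerD2l; exact: tangent.
Qed.

Lemma sum_powRN_le (R : realType) (r : R) (a N : nat) : 1 <= r -> (0 < a)%N ->
  (r - 1) * \sum_(a <= t < N) (t.+1)%:R `^ (- r) <= 1.
Proof.
move=> r1 a0; case: (leqP a N) => aN; last by rewrite big_geq ?mulr0 // ltnW.
pose f (t : nat) : R := - t%:R `^ (1 - r).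
apply: (@le_trans _ _ (\sum_(a <= t < N) (f t.+1 - f t))).
  rewrite mulr_sumr; apply: ler_sum_nat => t /andP[at0 _].
  rewrite /f opprK [leRHS]addrC -natr1; apply: powR_subS_ge => //.
  by rewrite ltr0n (leq_trans a0 at0).
rewrite telescope_sumr // /f opprK -[leRHS]add0r lerD ?oppr_le0 ?powR_ge0 //.
by rewrite -[leRHS](powRr0 a%:R); apply: ler_powR; rewrite ?ler1n ?subr_le0.
Qed.

Lemma mul1D_le (R : realFieldType) (b u v w : R) : 1 < b -> 0 < u ->
  u * b <= 1 -> 0 <= v <= u * u -> u * b <= w * (b - 1) ->
  (1 + u) * (1 + v) <= 1 + w.
Proof.
move=> b1 u0 ub /andP[v0 vu] uw.
have cube : (u + u * u + u * u * u) * (b - 1) <= u * b.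
  rewrite -subr_ge0.
  have -> : u * b - (u + u * u + u * u * u) * (b - 1) =
           u * ((1 - u * b) * (1 + u) + u * u) by ring.
  apply: mulr_ge0; first exact: ltW.
  by apply: addr_ge0; apply: mulr_ge0; lra.
have : u + u * u + u * u * u <= w.
  by rewrite -(@ler_pM2r _ (b - 1)) ?subr_gt0 // (le_trans cube).
nra.
Qed.

Lemma powRN_mul1D_le (R : realType) (r a b c : R) :
  1 <= r -> 1 <= a -> a + 1 <= b -> b ^+ 2 <= c ->
  (1 + b `^ (- r)) * (1 + c `^ (- r)) <= 1 + a `^ (- r).
Proof.
move=> r1 a1 ab bc.
have a0 : 0 < a by lra.
have b1 : 1 < b by lra.
have b0 : 0 < b by lra.
have c0 : 0 < c by apply: lt_le_trans bc; rewrite exprn_gt0.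
have r0 : 0 < r by lra.
have [b0w c0w r0w] := And3 (ltW b0) (ltW c0) (ltW r0).
apply: (@mul1D_le _ b) => //.
- by rewrite powR_gt0.
- by rewrite powRN mulrC ler_pdivrMr ?powR_gt0 // mul1r le1r_powR // ltW.
- rewrite powR_ge0 !powRN -invfM lef_pV2 ?posrE ?mulr_gt0 ?powR_gt0 //=.
  by rewrite -powRM // ge0_ler_powR ?nnegrE ?mulr_ge0 // -expr2.
have key : a `^ r * b <= (b - 1) * b `^ r.
  have b10 : 0 <= b - 1 by lra.
  apply: (@le_trans _ _ ((b - 1) `^ r * b)).
    by rewrite ler_wpM2r ?ge0_ler_powR ?nnegrE //; lra.
  rewrite -(mulr_powRB1 b10 r0) -(mulr_powRB1 (ltW b0) r0) -mulrA ler_wpM2l //.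
  by rewrite mulrC ler_wpM2l ?ge0_ler_powR ?nnegrE //; lra.
rewrite !powRN mulrC ler_pdivrMr ?powR_gt0 //.
rewrite -mulrA [_^-1 * _]mulrC ler_pdivlMr ?powR_gt0 //.
by rewrite [leLHS]mulrC; exact: key.
Qed.

Lemma sigma_neg_mul_le_small_factor (R : realType) (r : R) p q P n :
  1 <= r -> prime p -> prime q -> prime P -> (p < q)%N -> (q ^ 2 < P)%N ->
  (0 < n)%N -> (p %| n)%N -> sigma_neg r (q * P) <= sigma_neg r n.
Proof.
move=> r1 pp qp Pp pq qP n0 pn.
have qP_coprime : coprime q P.
  rewrite prime_coprime // dvdn_prime2 // neq_ltn (leq_ltn_trans _ qP) //.
  by rewrite leq_pmulr // prime_gt0.
apply: le_trans (sigma_neg_coprime_le _ _ _ _) _; rewrite ?prime_gt0 //.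
have p1 : p != 1%N by rewrite neq_ltn prime_gt1 ?orbT.
rewrite (sigma_neg_prime r qp) (sigma_neg_prime r Pp).
apply: le_trans (sigma_neg_ge1D r n0 p1 pn).
apply: powRN_mul1D_le => //.
- by rewrite ler1n prime_gt0.
- by rewrite natr1 ler_nat.
- by rewrite -natrX ler_nat ltnW.
Qed.

Section EulerTail.
Variables (R : realType) (r : R).
Hypothesis r_gt1 : 1 < r.

Definition euler_factor (t : nat) : R := (1 - (nth_prime t)%:R `^ (- r))^-1.

Definition partial_tail (m N : nat) : R := \prod_(m.+1 <= t < N) euler_factor t.

Lemma powRN_le_half (x : R) : 2 <= x -> x `^ (- r) <= 2^-1.
Proof.
move=> x2; have x0 : 0 < x by apply: lt_le_trans x2.
rewrite powRN lef_pV2 ?posrE ?powR_gt0 //.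
apply: (le_trans x2); apply: le1r_powR; last exact: ltW.
by rewrite (le_trans _ x2) // ler1n.
Qed.

Lemma powRN_nth_prime_le t : (nth_prime t)%:R `^ (- r) <= t.+1%:R `^ (- r).
Proof.
have r0 : 0 <= r by apply/ltW/(lt_trans ltr01).
have p0 : (0 < nth_prime t)%N := leq_ltn_trans (leq0n t) (ltn_id_nth_prime t).
rewrite !powRN lef_pV2 ?posrE ?powR_gt0 ?ltr0n //.
by rewrite ge0_ler_powR ?nnegrE ?ler0n // ler_nat ltn_id_nth_prime.
Qed.

Lemma euler_factor_ge1 t : (0 < t)%N -> 1 <= euler_factor t.
Proof.
move=> t0; have x0 := powR_ge0 (nth_prime t)%:R (- r).
have xh : (nth_prime t)%:R `^ (- r) <= 2^-1.
  by rewrite powRN_le_half // (ler_nat R 2) prime_gt1 ?prime_nth_prime.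
by rewrite invf_ge1 ?gerBl ?subr_gt0 //; apply: le_lt_trans xh _; lra.
Qed.

Lemma euler_factor_le_expR t : (0 < t)%N ->
  euler_factor t <= expR (2 * t.+1%:R `^ (- r)).
Proof.
move=> t0; have x0 := powR_ge0 (nth_prime t)%:R (- r).
have xt := powRN_nth_prime_le t.
have xh : (nth_prime t)%:R `^ (- r) <= 2^-1.
  by rewrite (le_trans xt) // powRN_le_half // (ler_nat R 2).
rewrite /euler_factor; apply: le_trans (invr1B_le_expR _) _.
  by rewrite x0.
by rewrite ler_expR ler_wpM2l.
Qed.

Lemma partial_tail_ge1 m N : 1 <= partial_tail m N.
Proof.
rewrite /partial_tail big_nat_cond.
apply: (big_ind (fun x => 1 <= x)) => [//|x y|t /andP[/andP[mt _] _]].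
  exact: mulr_ege1.
exact/euler_factor_ge1/(leq_ltn_trans _ mt).
Qed.

Lemma partial_tail_nondecreasing m : nondecreasing_seq (partial_tail m).
Proof.
apply/nondecreasing_seqP => N; rewrite /partial_tail.
have [mN|Nm] := leqP m.+1 N; last by rewrite !big_geq ?(ltnW Nm).
rewrite big_nat_recr //= ler_peMr ?euler_factor_ge1 //.
  exact: le_trans ler01 (partial_tail_ge1 m N).
exact: leq_trans mN.
Qed.

Lemma partial_tail_le_expR m N : partial_tail m N <= expR (2 / (r - 1)).
Proof.
apply: (@le_trans _ _ (\prod_(m.+1 <= t < N) expR (2 * t.+1%:R `^ (- r)))).
  rewrite /partial_tail big_nat_cond [leRHS]big_nat_cond; apply: ler_prod => t.
  case/andP=> /andP[mt _] _; have t0 : (0 < t)%N by apply: leq_ltn_trans mt.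
  by rewrite euler_factor_le_expR // (le_trans ler01) ?euler_factor_ge1.
rewrite -expR_sum ler_expR -mulr_sumr ler_pdivlMr ?subr_gt0 //.
by rewrite -mulrA ler_piMr // mulrC sum_powRN_le // ltW.
Qed.

(* Monotone and bounded, so [limn] in [u_tail] is a genuine limit. *)
Lemma partial_tail_le_u_tail m N : partial_tail m N <= u_tail r m.
Proof.
apply: nondecreasing_cvgn_le; first exact: partial_tail_nondecreasing.
apply: nondecreasing_is_cvgn; first exact: partial_tail_nondecreasing.
by exists (expR (2 / (r - 1))) => _ [n _ <-]; exact: partial_tail_le_expR.
Qed.

Lemma u_tail_ge1 m : 1 <= u_tail r m.
Proof. exact: le_trans (partial_tail_ge1 m 0) (partial_tail_le_u_tail m 0). Qed.

Lemma sigma_neg_le_partial_tail k N n : (0 < n)%N ->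
  (forall p, prime p -> (p %| n)%N -> (nth_prime k < p < nth_prime N)%N) ->
  sigma_neg r n <= partial_tail k N.
Proof.
elim: N n => [|N IH] n n0 hn.
  have -> : n = 1%N.
    apply/eqP; rewrite eqn_leq n0 andbT leqNgt; apply/negP => /pdiv_prime pp.
    by case/andP: (hn _ pp (pdiv_dvd n)) => _; rewrite ltnNge prime_gt0.
  by rewrite sigma_neg1 partial_tail_ge1.
set p := nth_prime N.
have [/andP[pp pn] | npn] := boolP (prime p && (p %| n)%N); last first.
  apply: le_trans (partial_tail_nondecreasing k (leqnSn N)).
  apply: IH => // d dp dn; case/andP: (hn d dp dn) => -> /=.
  apply: nth_prime_gap => //.
  by apply: contraNneq npn => dE; rewrite /p -dE dp dn.
have [n' cpn' nE] := pfactor_coprime pp n0.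
have n'0 : (0 < n')%N by move: n0; rewrite nE muln_gt0 => /andP[].
have kN : (k < N)%N by rewrite -ltn_nth_prime; case/andP: (hn p pp pn).
rewrite /partial_tail big_nat_recr //= -/(partial_tail k N) nE.
apply: le_trans (sigma_neg_coprime_le _ _ _ _) _ => //.
  by rewrite coprimeXr // coprime_sym.
apply: ler_pM; rewrite ?sigma_neg_ge0 //.
  apply: IH => // d dp dn'; have dn : (d %| n)%N by rewrite nE dvdn_mulr.
  case/andP: (hn d dp dn) => -> /=; apply: nth_prime_gap => //.
  by apply: contraTneq cpn' => dE; rewrite /p -dE prime_coprime // negbK.
apply: le_trans (sigma_neg_pfactor_le _ _ pp) (sum_geometric_le _ _).
rewrite powR_gt0 ?ltr0n ?prime_gt0 //=.
apply: le_lt_trans (powRN_le_half _) _.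
  by rewrite (ler_nat R 2) prime_gt1.
by rewrite invf_lt1 ?ltr1n.
Qed.

Lemma sigma_neg_le_u_tail k n : (0 < n)%N ->
  (forall p, prime p -> (p %| n)%N -> (nth_prime k < p)%N) ->
  sigma_neg r n <= u_tail r k.
Proof.
move=> n0 hn; apply: le_trans (partial_tail_le_u_tail k n).
apply: sigma_neg_le_partial_tail => // p pp pn.
by rewrite hn // (leq_ltn_trans (dvdn_leq n0 pn)) ?ltn_id_nth_prime.
Qed.

End EulerTail.

Theorem mainTheorem6 (R : realType) (r : R) (m k n : nat) :
  1 < r -> (0 < m)%N -> (0 < k)%N ->
  mighty r m -> mighty r k ->
  (nth_prime k ^ 2 < nth_prime m)%N ->
  sigma_neg r (nth_prime k) * u_tail r m < sigma_neg r n <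
    sigma_neg r (nth_prime k * nth_prime m) ->
  (nth_prime k %| n)%N.
Proof.
move=> r1 m0 k0 _ mighty_k qP /andP[lo hi].
have [qp Pp] := (prime_nth_prime k0, prime_nth_prime m0).
have [-> | n0] := posnP n; first exact: dvdn0.
apply: contraT => qn.
have [[p [pp pn pq]] | no_small] :=
  pselect (exists p, [/\ prime p, (p %| n)%N & (p < nth_prime k)%N]).
  have := sigma_neg_mul_le_small_factor (ltW r1) pp qp Pp pq qP n0 pn.
  by move/(lt_le_trans hi); rewrite ltxx.
have large : forall d, prime d -> (d %| n)%N -> (nth_prime k < d)%N.
  move=> d dp dn; rewrite ltn_neqAle leqNgt; apply/andP; split.
    by apply: contraNneq qn => ->.
  by apply/negP => dk; apply: no_small; exists d.
have sigma_q :
    sigma_neg r (nth_prime k) <= sigma_neg r (nth_prime k) * u_tail r m.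
  by rewrite ler_peMr ?sigma_neg_ge0 ?u_tail_ge1.
move: mighty_k; rewrite /mighty -sigma_neg_prime // => mighty_k.
have := le_lt_trans (sigma_neg_le_u_tail r1 n0 large) mighty_k.
by move/lt_le_trans/(_ (le_trans sigma_q (ltW lo))); rewrite ltxx.
Qed.
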